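(* If an equivariant map $f:X\to Y$ of nominal sets is surjective and has orbit-finite fibres, then $f$ is safe.
   Context: Nominal sets over a countably infinite set $\mathcal V$ of names; $\mathsf{supp}(u)$ is the least finite support. An orbit is an equivalence class of $u\sim\pi\cdot u$. $f$ has orbit-finite fibres if each fibre $f^{-1}(v)$ is contained in finitely many orbits of $X$. $u\in X$ is $f$-safe if $|\mathsf{supp}(u)|=\max\{|\mathsf{supp}(v)|:v\in f^{-1}(f(u))\}$ (the maximum existing); $f$ is safe if every element of $Y$ has an $f$-safe preimage. *)

From Stdlib Require Import List Arith.
Import ListNotations.
Set Implicit Arguments.

Record perm := mkPerm {
  pfun : nat -> nat;
  pinv : nat -> nat;
  pfunK : forall a, pinv (pfun a) = a;
  pinvK : forall a, pfun (pinv a) = a;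
  pfin : exists l : list nat, forall a, ~ In a l -> pfun a = a
}.

Definition pid : perm.
Proof.
  refine (@mkPerm (fun a => a) (fun a => a) (fun a => eq_refl) (fun a => eq_refl) _).
  exists []. intros a _. reflexivity.
Defined.

Definition pcomp (p q : perm) : perm.
Proof.
  refine (@mkPerm (fun a => pfun p (pfun q a)) (fun a => pinv q (pinv p a)) _ _ _).
  - intro a. rewrite pfunK, pfunK. reflexivity.
  - intro a. rewrite pinvK, pinvK. reflexivity.
  - destruct (pfin p) as [lp Hp]. destruct (pfin q) as [lq Hq].
    exists (lp ++ lq). intros a Ha.
    rewrite Hq, Hp; [reflexivity| |]; intro H; apply Ha; apply in_or_app; auto.
Defined.

Definition supports {X : Type} (act : perm -> X -> X) (A : list nat) (x : X) : Prop :=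
  forall p : perm, (forall a, In a A -> pfun p a = a) -> act p x = x.

Record nominal := mkNominal {
  car :> Type;
  act : perm -> car -> car;
  act_id : forall x, act pid x = x;
  act_comp : forall p q x, act p (act q x) = act (pcomp p q) x;
  act_ext : forall p q x, (forall a, pfun p a = pfun q a) -> act p x = act q x;
  fin_supp : forall x : car, exists A : list nat, supports act A x
}.

(** The least finite support: a name belongs to [supp x] iff it belongs to
    every finite support of [x]. *)
Definition in_supp {X : nominal} (x : X) (a : nat) : Prop :=
  forall A : list nat, supports (act X) A x -> In a A.

Definition supp_card {X : nominal} (x : X) (n : nat) : Prop :=
  exists l : list nat, NoDup l /\ (forall a, In a l <-> in_supp x a) /\ length l = n.

Definition equivariant {X Y : nominal} (f : X -> Y) : Prop :=
  forall (p : perm) (x : X), f (act X p x) = act Y p (f x).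

Definition same_orbit {X : nominal} (u v : X) : Prop :=
  exists p : perm, v = act X p u.

Definition surjective {X Y : Type} (f : X -> Y) : Prop :=
  forall y, exists x, f x = y.

Definition orbit_finite_fibres {X Y : nominal} (f : X -> Y) : Prop :=
  forall y : Y, exists us : list X,
    forall w : X, f w = y -> exists u, In u us /\ same_orbit u w.

Definition f_safe {X Y : nominal} (f : X -> Y) (u : X) : Prop :=
  exists n, supp_card u n /\
    forall w m, f w = f u -> supp_card w m -> m <= n.

Definition safe {X Y : nominal} (f : X -> Y) : Prop :=
  forall y : Y, exists u : X, f u = y /\ f_safe f u.

(** The size of the least support is invariant under the action:
    if [A] supports [u] then [p(A)] supports [p·u], so [supp (p·u) = p(supp u)].
    Hence the support size is constant on orbits.  A fibre [f^-1(y)] meets only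
    finitely many orbits, represented by a list [us], so the support sizes of
    its elements are bounded by the largest support size occurring in [us].
    A bounded [nat]-valued function on an inhabited set attains its maximum
    (classically), and the fibre is inhabited by surjectivity; a maximiser is
    exactly an f-safe preimage of [y]. *)

From Stdlib Require Import List Arith Lia FinFun Classical ClassicalEpsilon.
Import ListNotations.
Set Implicit Arguments.

Definition perm_inv (p : perm) : perm.
Proof.
  refine (@mkPerm (pinv p) (pfun p) (pinvK p) (pfunK p) _).
  destruct (pfin p) as [l Hl]. exists l. intros a Ha.
  rewrite <- (Hl a Ha) at 1. apply pfunK.
Defined.

Lemma act_inv (X : nominal) (p : perm) (u : X) :
  act X (perm_inv p) (act X p u) = u.
Proof.
  rewrite act_comp. rewrite <- (act_id X u) at 2. apply act_ext.
  intro a. apply pfunK.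
Qed.

(** Supports are transported by the action: [A] supports [u] implies
    [p(A)] supports [p·u] (conjugate the fixing permutation by [p]). *)
Lemma supports_act (X : nominal) (p : perm) (A : list nat) (u : X) :
  supports (act X) A u -> supports (act X) (map (pfun p) A) (act X p u).
Proof.
  intros HA q Hq.
  set (r := pcomp (perm_inv p) (pcomp q p)).
  assert (r_fixes_u : act X r u = u).
  { apply HA. intros a Ha. unfold r; simpl.
    rewrite (Hq (pfun p a)) by (apply in_map; exact Ha). apply pfunK. }
  rewrite act_comp. rewrite <- r_fixes_u at 2. rewrite act_comp. apply act_ext.
  intro a. unfold r; simpl. symmetry. apply pinvK.
Qed.

Lemma in_supp_act (X : nominal) (p : perm) (u : X) (a : nat) :
  in_supp (act X p u) a <-> in_supp u (pinv p a).
Proof.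
  split.
  - intros H A HA. apply (@supports_act X p), H, in_map_iff in HA.
    destruct HA as [b [<- Hb]]. rewrite pfunK. exact Hb.
  - intros H B HB. apply (@supports_act X (perm_inv p)) in HB.
    rewrite act_inv in HB. apply H, in_map_iff in HB.
    destruct HB as [b [Hb HbB]]. simpl in Hb.
    replace a with b by (rewrite <- (pinvK p b), <- (pinvK p a); congruence).
    exact HbB.
Qed.

Lemma supp_card_act (X : nominal) (p : perm) (u : X) (n : nat) :
  supp_card u n -> supp_card (act X p u) n.
Proof.
  intros [l [Hnd [Hl Hlen]]]. exists (map (pfun p) l). repeat split.
  - apply Injective_map_NoDup; [|exact Hnd].
    intros a b E. rewrite <- (pfunK p a), <- (pfunK p b). congruence.
  - intros Ha. apply in_map_iff in Ha. destruct Ha as [b [<- Hb]].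
    apply in_supp_act. rewrite pfunK. apply Hl, Hb.
  - intros Ha. apply in_supp_act, Hl in Ha. apply in_map_iff.
    exists (pinv p a). rewrite pinvK. auto.
  - rewrite length_map. exact Hlen.
Qed.

(** Every element has a support size: filter a duplicate-free finite support
    by (classically decided) membership in the least support. *)
Lemma supp_card_exists (X : nominal) (x : X) : exists n, supp_card x n.
Proof.
  destruct (fin_supp X x) as [A HA].
  set (keep a := if excluded_middle_informative (in_supp x a) then true else false).
  exists (length (filter keep (nodup Nat.eq_dec A))), (filter keep (nodup Nat.eq_dec A)).
  repeat split.
  - apply NoDup_filter, NoDup_nodup.
  - intro Ha. apply filter_In in Ha as [_ Hkeep]. unfold keep in Hkeep.
    destruct excluded_middle_informative; [assumption | discriminate].
  - intro Ha. apply filter_In. split.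
    + apply nodup_In, Ha, HA.
    + unfold keep. destruct excluded_middle_informative; tauto.
Qed.

Lemma supp_card_unique (X : nominal) (x : X) (n m : nat) :
  supp_card x n -> supp_card x m -> n = m.
Proof.
  intros [l [Hl [Hml <-]]] [k [Hk [Hmk <-]]].
  apply Nat.le_antisymm; apply NoDup_incl_length; auto;
    intros a Ha; [apply Hmk, Hml | apply Hml, Hmk]; exact Ha.
Qed.

Definition supp_size (X : nominal) (x : X) : nat :=
  proj1_sig (constructive_indefinite_description _ (@supp_card_exists X x)).
Arguments supp_size {X} x.

Lemma supp_size_spec (X : nominal) (x : X) : supp_card x (supp_size x).
Proof. unfold supp_size. destruct constructive_indefinite_description; assumption. Qed.
Arguments supp_size_spec {X} x.

Lemma supp_size_orbit (X : nominal) (u w : X) :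
  same_orbit u w -> supp_size w = supp_size u.
Proof.
  intros [p ->]. apply (supp_card_unique (supp_size_spec _)).
  apply supp_card_act, supp_size_spec.
Qed.

(** Maximum principle: a [nat]-valued function bounded on an inhabited set
    attains its maximum there.  Induction on the gap [B - g x] to the bound. *)
Lemma bounded_max_attained (A : Type) (P : A -> Prop) (g : A -> nat) (B : nat) :
  (forall x, P x -> g x <= B) -> (exists x, P x) ->
  exists x0, P x0 /\ forall x, P x -> g x <= g x0.
Proof.
  intros Hbound [x Hx].
  remember (B - g x) as gap eqn:Hgap. revert x Hx Hgap.
  induction gap as [gap IH] using lt_wf_ind; intros x Hx Hgap.
  destruct (classic (exists w, P w /\ g x < g w)) as [[w [Hw Hlt]] | Hnone].
  - specialize (Hbound w Hw). apply (IH (B - g w)) with w; [lia | exact Hw | reflexivity].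
  - exists x. split; [exact Hx|]. intros w Hw.
    apply Nat.nlt_ge. intro Hlt. apply Hnone. eauto.
Qed.

Lemma fibre_supp_size_bounded (X Y : nominal) (f : X -> Y) :
  orbit_finite_fibres f ->
  forall y, exists B, forall w, f w = y -> supp_size w <= B.
Proof.
  intros Hfib y. destruct (Hfib y) as [us Hus].
  exists (list_max (map supp_size us)). intros w Hw.
  destruct (Hus w Hw) as [u [Hu Horb]].
  rewrite (supp_size_orbit Horb).
  assert (Hall : Forall (fun k => k <= list_max (map supp_size us)) (map supp_size us))
    by (apply list_max_le; reflexivity).
  rewrite Forall_forall in Hall. apply Hall, in_map, Hu.
Qed.

Theorem lemma5p31 (X Y : nominal) (f : X -> Y) :
  equivariant f -> surjective f -> orbit_finite_fibres f -> safe f.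
Proof.
  intros _ Hsurj Hfib y.
  destruct (fibre_supp_size_bounded Hfib y) as [B HB].
  destruct (bounded_max_attained (fun w => f w = y) supp_size HB (Hsurj y))
    as [u [Hu Hmax]].
  exists u. split; [exact Hu|].
  exists (supp_size u). split; [apply supp_size_spec|].
  intros w m Hw Hm. rewrite Hu in Hw.
  rewrite (supp_card_unique Hm (supp_size_spec w)). apply Hmax, Hw.
Qed.
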